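(* Let $n\ge 1$ and let $B$ be the $n\times n$ upper bidiagonal matrix with diagonal entries $B_{kk}=k^2$ for $k=1,\ldots,n$, superdiagonal entries $B_{k,k+1}=-(k+1)(n-k)$ for $k=1,\ldots,n-1$, and all other entries zero. Let $M=[m_{kj}]$ be the $n\times n$ lower-triangular matrix whose entries are $$m_{kj}=\frac{(j+1)_{k-j}\,(n-k+1)_{k-j}}{(2j+1)_{k-j}\,(k-j)!}\quad\text{for } k\ge j,\qquad m_{kj}=0\quad\text{for } k<j,$$ where $(x)_m=x(x+1)\cdots(x+m-1)$ (with $(x)_0=1$). Then $S=M^T$ diagonalizes $B$, namely $S$ is invertible and $SBS^{-1}=\Lambda=\mathrm{Diag}(1^2,2^2,\ldots,n^2)$.
   Context: $(x)_m$ denotes the (rising) Pochhammer symbol. In the paper, $B=VP^{-2}V^{-1}$ where $P$ is the $n\times n$ matrix with $P_{ij}=1/i$ for $j\ge n-i+1$ and $0$ otherwise, and $V_{ij}=(-1)^{i-j}\binom{i-1}{j-1}$ for $i\ge j$; the statement above only concerns the explicit bidiagonal $B$. *)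

From HB Require Import structures.
From mathcomp Require Import all_boot all_order all_algebra.
Set Implicit Arguments. Unset Strict Implicit. Unset Printing Implicit Defensive.
Import Order.TTheory GRing.Theory Num.Theory.
Local Open Scope ring_scope.

Definition pochhammer {R : numFieldType} (x : R) (m : nat) : R :=
  \prod_(i < m) (x + i%:R).

(* Indices are 0-based: row i : 'I_n corresponds to k = i+1 of the paper. *)
Definition Bmat {R : numFieldType} (n : nat) : 'M[R]_n :=
  \matrix_(i < n, j < n)
    if (j == i :> nat) then (i.+1 ^ 2)%:R
    else if (j == i.+1 :> nat) then - ((i.+2)%:R * (n - i.+1)%:R)
    else 0.

(* m_{kj} = (j+1)_{k-j} (n-k+1)_{k-j} / ((2j+1)_{k-j} (k-j)!) for k >= j, else 0.
   With k = i+1, j = j'+1: j+1 = j'+2, n-k+1 = n-i, 2j+1 = 2j'+3, k-j = i-j'. *)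
Definition Mmat {R : numFieldType} (n : nat) : 'M[R]_n :=
  \matrix_(i < n, j < n)
    if (j <= i)%N then
      pochhammer (j.+2)%:R (i - j) * pochhammer (n - i)%:R (i - j)
      / (pochhammer (j.*2.+3)%:R (i - j) * ((i - j)`!)%:R)
    else 0.

Definition Lambda {R : numFieldType} (n : nat) : 'M[R]_n :=
  diag_mx (\row_(i < n) (i.+1 ^ 2)%:R).

(** Since [B] is upper bidiagonal, column [k] of [S B] only involves columns
    [k] and [k-1] of [S], so [S B = Lambda S] amounts to the two-term
    recurrence [(k^2 - j^2) m_{kj} = k (n-k+1) m_{k-1,j}] for the entries of
    [M]; it holds because [k^2 - j^2 = (k-j)(k+j)] is exactly the quotient of
    the denominators of [m_{kj}] and [m_{k-1,j}].  As [M] is lower triangular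
    with unit diagonal, [S] is invertible. *)

From HB Require Import structures.
From mathcomp Require Import all_boot all_order all_algebra.
From mathcomp Require Import ring zify.
Import Order.TTheory GRing.Theory Num.Theory.
Local Open Scope ring_scope.

Section Bidiagonal_eigenbasis.
Variable R : numFieldType.

Lemma pochhammer_gt0 (x : R) m : 0 < x -> 0 < pochhammer x m.
Proof.
move=> x_gt0; apply: prodr_gt0 => i _.
by apply: ltr_wpDr => //; rewrite ler0n.
Qed.

Lemma pochhammer0 (x : R) : pochhammer x 0 = 1.
Proof. by rewrite /pochhammer big_ord0. Qed.

Lemma pochhammerS (x : R) m : pochhammer x m.+1 = pochhammer x m * (x + m%:R).
Proof. by rewrite /pochhammer big_ord_recr. Qed.

Lemma pochhammerSl (x : R) m : pochhammer x m.+1 = x * pochhammer (x + 1) m.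
Proof.
rewrite /pochhammer big_ord_recl addr0; congr (_ * _).
by apply: eq_bigr => i _; rewrite lift0 -addrA -natr1 [1 + _]addrC.
Qed.

Definition Mentry (n k j : nat) : R :=
  if (j <= k)%N then
    pochhammer (j.+2)%:R (k - j) * pochhammer (n - k)%:R (k - j)
    / (pochhammer (j.*2.+3)%:R (k - j) * ((k - j)`!)%:R)
  else 0.

Lemma MmatE n (i j : 'I_n) : Mmat n i j = Mentry n i j.
Proof. by rewrite mxE. Qed.

Lemma Mentry_gt n k j : (k < j)%N -> Mentry n k j = 0.
Proof. by move=> lt_kj; rewrite /Mentry leqNgt lt_kj. Qed.

Lemma Mentry_diag n k : Mentry n k k = 1.
Proof. by rewrite /Mentry leqnn subnn !pochhammer0 !mul1r invr1. Qed.

Lemma Mentry_rec n k j : (k < n)%N ->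
  ((k.+2 ^ 2)%:R - (j.+1 ^ 2)%:R) * Mentry n k.+1 j
  = (k.+2)%:R * (n - k.+1)%:R * Mentry n k j.
Proof.
move=> lt_kn; have [le_jk | lt_kj] := leqP j k; last first.
  rewrite (Mentry_gt _ _ _ lt_kj) mulr0.
  have [-> | ne_jk1] := eqVneq j k.+1; first by rewrite subrr mul0r.
  by rewrite Mentry_gt ?mulr0 // ltn_neqAle eq_sym ne_jk1.
rewrite /Mentry le_jk (leqW le_jk).
have [d def_k] : exists d, k = (j + d)%N by exists (k - j)%N; rewrite subnKC.
subst k.
have -> : ((j + d).+1 - j = d.+1)%N by lia.
have -> : ((j + d) - j = d)%N by lia.
have -> : (n - (j + d))%N = (n - (j + d).+1).+1 by lia.
set m := (n - (j + d).+1)%N; clearbody m.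
rewrite pochhammerS pochhammerSl pochhammerS factS -[m.+1]addn1 natrD -!mul2n.
have poch_neq0 : pochhammer (2 * j).+3%:R d != 0 :> R.
  by rewrite gt_eqF // pochhammer_gt0 // ltr0n.
have fact_neq0 : (d`!)%:R != 0 :> R by rewrite pnatr_eq0 -lt0n fact_gt0.
have last_neq0 : (2 * j).+3%:R + d%:R != 0 :> R by rewrite -natrD pnatr_eq0.
(* [(k+2)^2 - (j+1)^2 = (d+1)(2j+d+3)] cancels the two new denominator factors. *)
field; rewrite ?poch_neq0 ?fact_neq0 ?last_neq0 ?pnatr_eq0 //=.
by rewrite addrC natr1 -natrM -!natrD !pnatr_eq0; lia.
Qed.

Lemma mulmx_Bmat_col0 m n (A : 'M[R]_(m, n)) i (k : 'I_n) :
  val k = 0%N -> (A *m Bmat n) i k = A i k.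
Proof.
move=> k0; rewrite mxE (bigD1 k) //= big1 ?addr0 => [|l ne_lk].
  by rewrite mxE eqxx k0 mulr1.
rewrite mxE k0; have -> : (0 == l :> nat) = false.
  by apply: contraNF ne_lk => /eqP l0; apply/eqP/val_inj; rewrite /= k0.
by rewrite mulr0.
Qed.

Lemma mulmx_Bmat_colS m n (A : 'M[R]_(m, n)) i k (lt_k1n : (k.+1 < n)%N) :
  (A *m Bmat n) i (Ordinal lt_k1n)
  = A i (Ordinal lt_k1n) * (k.+2 ^ 2)%:R
    - A i (Ordinal (ltnW lt_k1n)) * ((k.+2)%:R * (n - k.+1)%:R).
Proof.
rewrite mxE (bigD1 (Ordinal lt_k1n)) //= (bigD1 (Ordinal (ltnW lt_k1n))) /=;
  last by rewrite -val_eqE /= ltn_eqF.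
rewrite big1 ?addr0 => [|l /andP[ne_lk1 ne_lk]].
  by rewrite !mxE /= eqxx (gtn_eqF (ltnSn k)) mulrN.
rewrite mxE /=; have -> : (k.+1 == l :> nat) = false.
  by apply: contraNF ne_lk1 => /eqP kl; apply/eqP/val_inj.
have -> : (k.+1 == l.+1 :> nat) = false.
  by rewrite eqSS; apply: contraNF ne_lk => /eqP kl; apply/eqP/val_inj.
by rewrite mulr0.
Qed.

Lemma Mmat_tr_Bmat n : (Mmat n)^T *m Bmat n = Lambda n *m (Mmat n)^T :> 'M[R]_n.
Proof.
apply/matrixP => j [[|k] lt_kn]; rewrite /Lambda mul_diag_mx [RHS]mxE.
  rewrite mulmx_Bmat_col0 // !mxE -/(Mentry n 0 j) /=.
  case: (posnP j) => [-> | j_gt0]; first by rewrite mul1r.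
  by rewrite Mentry_gt ?mulr0.
rewrite mulmx_Bmat_colS !mxE -/(Mentry n k.+1 j) -/(Mentry n k j) /=.
by rewrite [Mentry n k j * _]mulrC -(Mentry_rec _ _ _ (ltnW lt_kn)); ring.
Qed.

Lemma Mmat_unitmx n : (Mmat n : 'M[R]_n) \in unitmx.
Proof.
have trig : is_trig_mx (Mmat n : 'M[R]_n).
  by apply/is_trig_mxP => i j lt_ij; rewrite MmatE Mentry_gt.
rewrite unitmxE (det_trig trig) big1 => [|i _]; first exact: unitr1.
by rewrite MmatE Mentry_diag.
Qed.

End Bidiagonal_eigenbasis.

Theorem theorem1 (R : numFieldType) (n : nat) (hn : (1 <= n)%N) :
  let S : 'M[R]_n := (Mmat n)^T in
  S \in unitmx /\ S *m Bmat n *m invmx S = Lambda n.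
Proof.
move=> S; have S_unit : S \in unitmx by rewrite unitmx_tr Mmat_unitmx.
split => //.
by rewrite Mmat_tr_Bmat -mulmxA mulmxV // mulmx1.
Qed.
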